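(* For each finite set $I$, the linear map $\mathcal T:\mathbf{GP}[I]\to\mathcal R$ defined on generalized permutahedra $P\subseteq\mathbb R^I$ by $$\mathcal T(P)=\sum_{A\subseteq I}x_1^{|A|}\,y_1^{\mu_P(A)}\,x_2^{|I\setminus A|}\,y_2^{\mu_P(I)-\mu_P(A)}$$ (the universal Tutte character of $\mathbf{GP}$) is a strong valuation.
   Context: $\mathbf{GP}[I]$ is the real vector space with basis the generalized permutahedra in $\mathbb R^I$, i.e. polytopes $\{x:\sum_{i\in I}x_i=z(I),\ \sum_{i\in A}x_i\le z(A)\ \forall A\subseteq I\}$ for submodular $z:2^I\to\mathbb R$. For such $P$, $\mu_P(A)=\max_{x\in P}\sum_{i\in A}x_i$ (so $\mu_P(\emptyset)=0$). $\mathcal R$ is the real group algebra of monomials $x_1^ax_2^by_1^cy_2^d$ with $a,b\in\mathbb Z_{\ge0}$, $c,d\in\mathbb R$. A linear map $f:\mathbf{GP}[I]\to\mathcal R$ is a strong valuation if there is a linear map $\hat f$ on the span of the indicator functions $\mathbb 1_P$ of generalized permutahedra $P\subseteq\mathbb R^I$ with $f(P)=\hat f(\mathbb 1_P)$ for all $P$. *)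

From HB Require Import structures.
From mathcomp Require Import all_boot all_order all_algebra.
From mathcomp Require Import boolp classical_sets reals.
From mathcomp.multinomials Require Import monalg.
Set Implicit Arguments. Unset Strict Implicit. Unset Printing Implicit Defensive.
Import Order.TTheory GRing.Theory Num.Theory.
Local Open Scope ring_scope.

Section GP.
Variables (R : realType) (I : finType).

Definition pt := I -> R.

Definition submodular (z : {set I} -> R) : Prop :=
  forall A B : {set I}, z (A :|: B) + z (A :&: B) <= z A + z B.

Definition base_polytope (z : {set I} -> R) : set pt :=
  fun x => \sum_(i in [set: I]) x i = z [set: I] /\
           forall A : {set I}, \sum_(i in A) x i <= z A.

Definition is_GP (P : set pt) : Prop :=
  exists z : {set I} -> R, z (@finset.set0 I) = 0 /\ submodular z /\ P = base_polytope z.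

(* mu_P(A) = max_{x in P} sum_{i in A} x_i  (the max is attained, so = sup) *)
Definition mu (P : set pt) (A : {set I}) : R :=
  sup (fun s : R => exists2 x, P x & s = \sum_(i in A) x i).

Definition indic (P : set pt) : pt -> R := fun x => if `[< P x >] then 1 else 0.

Definition in_GP_indic_span (g : pt -> R) : Prop :=
  exists s : seq (R * set pt),
    (forall cP, cP \in s -> is_GP cP.2) /\
    g = (fun x => \sum_(cP <- s) cP.1 * indic cP.2 x).

(* monomials x1^a x2^b y1^c y2^d, coded by (a, b, c, d) *)
Definition monom := (nat * nat * R * R)%type.
(* the group algebra R, as a real vector space: finitely supported
   functions monom -> R (free R-module on the monomials) *)
Definition Ralg := {malg R[monom]}.
Definition mon (a b : nat) (c d : R) : Ralg := << ((a, b, c, d) : monom) >>.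

Definition strong_valuation (f : set pt -> Ralg) : Prop :=
  exists hatf : (pt -> R) -> Ralg,
    (forall g h, in_GP_indic_span g -> in_GP_indic_span h ->
       hatf (fun x => g x + h x) = hatf g + hatf h) /\
    (forall (c : R) g, in_GP_indic_span g ->
       hatf (fun x => c * g x) = c *: hatf g) /\
    (forall P, is_GP P -> f P = hatf (indic P)).

Definition tutte (P : set pt) : Ralg :=
  \sum_(A : {set I})
     mon #|A| #|~: A| (mu P A) (mu P [set: I] - mu P A).

End GP.

From HB Require Import structures.
From mathcomp Require Import all_boot all_order all_algebra.
From mathcomp Require Import boolp classical_sets fsbigop reals.
From mathcomp.multinomials Require Import monalg.
From mathcomp Require Import topology normedtype derive lra.
Set Implicit Arguments. Unset Strict Implicit. Unset Printing Implicit Defensive.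
Import Order.TTheory GRing.Theory Num.Theory.
Import numFieldTopology.Exports.
Local Open Scope ring_scope.

(* We construct the linear extension hatT explicitly on
   functions g : R^I -> R, following Groemer's approach to valuations via an
   Euler characteristic.

   - The jump functional  jump f = sum_t (f t - f(t+))  sends the indicator
     of a compact interval to 1 and the empty indicator to 0.  Iterating it
     along all coordinates gives a functional chi which is linear on
     combinations of indicators of convex compact sets and sends each such
     indicator 1_Q to [Q nonempty].
   - For a generalized permutahedron P, the set of y in P with
     a <= sum_A y and sum_I y = b (a slab) is nonempty iff a <= mu_P(A) and
     b = mu_P(I), since mu_P(A) is attained and sum_I is constant on P.
   - Hence the jump at a of  s |-> chi (g 1_{slab A s b})  extracts, from
     g = sum_k c_k 1_{P_k}, the total coefficient of the P_k with
     (mu_{P_k}(A), mu_{P_k}(I)) = (a, b).  Summing these coefficients times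
     the corresponding monomials defines hatT, which is manifestly given on
     such combinations by  sum_k c_k T(P_k), whence linearity. *)

Section Iverson.
Variable R : realType.

Definition iv (P : Prop) : R := if `[< P >] then 1 else 0.

Lemma ivT (P : Prop) : P -> iv P = 1.
Proof. by move=> p; rewrite /iv asboolT. Qed.

Lemma ivF (P : Prop) : ~ P -> iv P = 0.
Proof. by move=> np; rewrite /iv asboolF. Qed.

Lemma iv_iff (P Q : Prop) : (P <-> Q) -> iv P = iv Q.
Proof. by move=> /propext ->. Qed.

Lemma ivM (P Q : Prop) : iv (P /\ Q) = iv P * iv Q.
Proof.
have [p|np] := pselect P; last by rewrite (ivF np) mul0r ivF // => -[].
have [q|nq] := pselect Q; last by rewrite (ivF nq) mulr0 ivF // => -[].
by rewrite !ivT ?mulr1.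
Qed.

End Iverson.
Arguments iv {R}.
Arguments ivT {R P}.
Arguments ivF {R P}.
Arguments iv_iff {R P Q}.

Section FiniteSums.
Variables (K : choiceType) (V : zmodType).

Definition fsum (f : K -> V) : V := \sum_(t \in [set: K]) f t.

Definition fsupp (f : K -> V) (s : seq K) := forall t, t \notin s -> f t = 0.

Lemma fsumE (f : K -> V) (s : seq K) : uniq s -> fsupp f s ->
  fsum f = \sum_(t <- s) f t.
Proof.
move=> us fs; rewrite /fsum (fsbigE s) //; last by move=> t _; exact: fs.
by apply: eq_bigl => t; rewrite in_setT.
Qed.

Lemma fsum_point (f : K -> V) (p : K) : (forall t, t != p -> f t = 0) ->
  fsum f = f p.
Proof.
by move=> fp; rewrite (@fsumE _ [:: p]) ?big_seq1 // => t; rewrite inE; exact: fp.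
Qed.

Lemma fsum_sum (J : eqType) (r : seq J) (F : J -> K -> V) :
  (forall k, k \in r -> exists s, fsupp (F k) s) ->
  fsum (fun t => \sum_(k <- r) F k t) = \sum_(k <- r) fsum (F k).
Proof.
move=> supp; have [s common] : exists s, forall k, k \in r -> fsupp (F k) s.
  elim: r supp => [|a r IH] supp; first by exists [::].
  have [sa ha] := supp a (mem_head _ _).
  have [s hs] := IH (fun k kr => supp k (mem_behead (s := a :: r) kr)).
  exists (sa ++ s) => k; rewrite inE => /predU1P [->|kr] t; rewrite mem_cat negb_or.
    by case/andP => /ha.
  by case/andP => _ /(hs k kr).
have common' k : k \in r -> fsupp (F k) (undup s).
  by move=> kr t; rewrite mem_undup; exact: common.
rewrite (@fsumE _ (undup s)) ?undup_uniq //; last first.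
  by move=> t ts; rewrite big_seq big1 // => k kr; exact: common'.
rewrite exchange_big big_seq [RHS]big_seq; apply: eq_bigr => k kr.
by rewrite (@fsumE _ (undup s)) ?undup_uniq //; exact: common'.
Qed.

End FiniteSums.

Section Jumps.
Variable R : realType.
Local Open Scope classical_set_scope.

Definition rlim (f : R -> R) (t : R) : R := lim (f s @[s --> t^'+]).

Definition jump (f : R -> R) : R := fsum (fun t => f t - rlim f t).

Lemma rlimE (f : R -> R) t c : (\forall s \near t^'+, f s = c) -> rlim f t = c.
Proof. by move=> fc; apply: cvg_lim; [exact: Rhausdorff|exact: cvg_near_cst]. Qed.

Lemma near_sum (J : eqType) (r : seq J) (F : J -> R -> R) (c : J -> R) t :
  (forall k, k \in r -> \forall s \near t^'+, F k s = c k) ->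
  \forall s \near t^'+, \sum_(k <- r) F k s = \sum_(k <- r) c k.
Proof.
elim: r => [|a r IH] near_k; first by near=> s; rewrite !big_nil.
near=> s; rewrite !big_cons; congr (_ + _).
  by near: s; exact: near_k (mem_head _ _).
near: s; apply: IH => k kr; exact: near_k (mem_behead (s := a :: r) kr).
Unshelve. all: by end_near.
Qed.

Definition interval_like (p : R -> Prop) :=
  (forall t, ~ p t) \/ exists lo hi, lo <= hi /\ forall t, p t <-> lo <= t <= hi.

Lemma itv_near (lo hi t : R) :
  \forall s \near t^'+, iv (lo <= s <= hi) = iv (lo <= t < hi) :> R.
Proof.
have [tlo|lot] := ltP t lo.
  near=> s; have slo : s < lo by near: s; exact: nbhs_right_lt.
  by rewrite !ivF //; lra.
have [thi|hit] := ltP t hi.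
  near=> s; have ts : t < s by near: s; exact: nbhs_right_gt.
  have shi : s < hi by near: s; exact: nbhs_right_lt.
  by rewrite !ivT //; lra.
near=> s; have ts : t < s by near: s; exact: nbhs_right_gt.
by rewrite !ivF //; lra.
Unshelve. all: by end_near.
Qed.

Lemma interval_jump (p : R -> Prop) : interval_like p ->
  (forall t, \forall s \near t^'+, iv (p s) = rlim (fun s => iv (p s)) t) /\
  exists h, (forall t, t != h -> iv (p t) - rlim (fun s => iv (p s)) t = 0) /\
    iv (p h) - rlim (fun s => iv (p s)) h = iv (exists t, p t).
Proof.
case=> [empty|[lo [hi [lohi pE]]]].
  have zero t : \forall s \near t^'+, iv (p s) = 0 by near=> s; exact: ivF.
  have lim0 t : rlim (fun s => iv (p s)) t = 0 by exact: rlimE.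
  split=> [t|]; first by rewrite lim0.
  have nonempty : ~ exists t, p t by case=> t /empty.
  by exists 0; split=> [t _|]; rewrite lim0 !ivF ?subr0.
have ivpE t : iv (p t) = iv (lo <= t <= hi) by exact: iv_iff.
have limE t : rlim (fun s => iv (p s)) t = iv (lo <= t < hi).
  by apply: rlimE; near=> s; rewrite ivpE; near: s; exact: itv_near.
split=> [t|]; first by near=> s; rewrite ivpE limE; near: s; exact: itv_near.
exists hi; split=> [t tn|]; rewrite ivpE limE.
  have [tin|tout] := pselect (lo <= t <= hi); last by rewrite !ivF ?subr0 //; lra.
  by rewrite !ivT ?subrr //; move: tn => /eqP; lra.
rewrite (@ivT _ (exists t, p t)); last by exists hi; apply/pE; lra.
by rewrite ivT ?ivF ?subr0 //; lra.
Unshelve. all: by end_near.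
Qed.

Lemma halfline_near (m a : R) : \forall s \near a^'+, iv (s <= m) = iv (a < m) :> R.
Proof.
have [am|ma] := ltP a m.
  near=> s; have sm : s < m by near: s; exact: nbhs_right_lt.
  by rewrite !ivT // ltW.
near=> s; have as_ : a < s by near: s; exact: nbhs_right_gt.
by rewrite !ivF //; lra.
Unshelve. all: by end_near.
Qed.

Lemma halfline_jump (m a : R) : iv (a <= m) - iv (a < m) = iv (a = m) :> R.
Proof.
have [am|ma|->] := ltgtP a m; last by rewrite (ivT (erefl m)) (ivT isT) ivF ?subr0.
  by rewrite subrr ivF // => e; lra.
by rewrite subrr ivF // => e; lra.
Qed.

Lemma jump_comb (J : eqType) (r : seq J) (c : J -> R) (p : J -> R -> Prop) :
  (forall k, k \in r -> interval_like (p k)) ->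
  jump (fun t => \sum_(k <- r) c k * iv (p k t)) =
  \sum_(k <- r) c k * iv (exists t, p k t).
Proof.
move=> itv; pose lim_k k := rlim (fun s => iv (p k s)).
have rlim_comb t : rlim (fun s => \sum_(k <- r) c k * iv (p k s)) t =
    \sum_(k <- r) c k * lim_k k t.
  apply: rlimE; apply: near_sum => k kr; have [near_k _] := interval_jump (itv k kr).
  by apply: filterS (near_k t) => s ->.
have diffE : (fun t => \sum_(k <- r) c k * iv (p k t)
                     - rlim (fun s => \sum_(k <- r) c k * iv (p k s)) t) =
             (fun t => \sum_(k <- r) c k * (iv (p k t) - lim_k k t)).
  by apply: funext => t; rewrite rlim_comb -sumrB; apply: eq_bigr => k _; rewrite mulrBr.
rewrite /jump diffE fsum_sum => [|k kr]; last first.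
  have [_ [h [off_h _]]] := interval_jump (itv k kr).
  by exists [:: h] => t; rewrite mem_seq1 => /off_h ->; rewrite mulr0.
apply: eq_big_seq => k kr; have [_ [h [off_h at_h]]] := interval_jump (itv k kr).
by rewrite (@fsum_point _ _ _ h) => [|t /off_h ->]; rewrite ?at_h ?mulr0.
Qed.

End Jumps.

(* An Euler characteristic on R^I, built by iterating the jump functional
   along a list L of coordinates: chiL L g x only depends on g restricted
   to the affine slice through x in which the coordinates of L are free. *)
Section IteratedJumps.
Variables (R : realType) (I : eqType).
Local Notation pt := (I -> R).

Definition upd (x : pt) (i : I) (t : R) : pt :=
  fun j => if j == i then t else x j.

Fixpoint chiL (L : seq I) (g : pt -> R) (x : pt) : R :=
  if L is i :: L' then jump (fun t => chiL L' g (upd x i t)) else g x.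

Definition fib (Q : set pt) (L : seq I) (x : pt) :=
  exists2 y, Q y & forall j, j \notin L -> y j = x j.

Definition interval_fibres (Q : set pt) := forall L x i, i \notin L ->
  interval_like (fun t => fib Q L (upd x i t)).

Lemma fib_nil (Q : set pt) x : fib Q [::] x <-> Q x.
Proof.
split=> [[y Qy yx]|Qx]; last by exists x.
by have <- : y = x by apply: funext => j; exact: yx.
Qed.

Lemma fib_cons (Q : set pt) i L x : i \notin L ->
  fib Q (i :: L) x <-> exists t, fib Q L (upd x i t).
Proof.
move=> iL; split=> [[y Qy yx]|[t [y Qy yx]]].
  exists (y i), y => // j jL; rewrite /upd; case: eqVneq => [->//|ji].
  by apply: yx; rewrite inE negb_or ji.
exists y => // j; rewrite inE negb_or => /andP [ji jL].
by rewrite yx // /upd (negbTE ji).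
Qed.

Lemma chiL_comb (J : eqType) (r : seq J) (c : J -> R) (Q : J -> set pt)
    (L : seq I) (x : pt) : uniq L -> (forall k, k \in r -> interval_fibres (Q k)) ->
  chiL L (fun y => \sum_(k <- r) c k * iv (Q k y)) x =
  \sum_(k <- r) c k * iv (fib (Q k) L x).
Proof.
move=> + fibres; elim: L x => [|i L IH] x /=.
  move=> _; apply: eq_bigr => k _; congr (_ * _).
  by apply: iv_iff; exact: iff_sym (fib_nil _ _).
case/andP=> iL uL; rewrite (@eq_fun _ _ _ (fun t => \sum_(k <- r) c k *
    iv (fib (Q k) L (upd x i t)))) => [|t]; last exact: IH.
rewrite jump_comb => [|k kr]; last exact: fibres.
apply: eq_bigr => k _; congr (_ * _).
by apply: iv_iff; exact: iff_sym (@fib_cons (Q k) i L x iL).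
Qed.

End IteratedJumps.

(* Convex compact subsets of R^I have interval fibres: every line parallel
   to a coordinate axis inside an affine coordinate slice meets them in an
   interval, because the slice is again convex and compact and the
   projection of a convex compact set on an axis is a compact interval. *)
Section ConvexCompact.
Local Open Scope classical_set_scope.
Variables (R : realType) (I : finType).
Local Notation pt := (I -> R).

Definition Rtopo : topologicalType := Topological.clone R _.
Definition ptopo : topologicalType := @prod_topology I (fun _ => Rtopo).

Definition csum (A : {set I}) (y : pt) : R := \sum_(i in A) y i.

Definition convex_pts (Q : set pt) := forall y1 y2 (l : R),
  Q y1 -> Q y2 -> 0 <= l <= 1 -> Q (fun j => y1 j + l * (y2 j - y1 j)).

Lemma convex_ptsI (Q1 Q2 : set pt) :
  convex_pts Q1 -> convex_pts Q2 -> convex_pts (Q1 `&` Q2).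
Proof. by move=> cvx1 cvx2 y1 y2 l [] ? ? [] ? ? l01; split; [exact: cvx1|exact: cvx2]. Qed.

Lemma csum_continuous (A : {set I}) : continuous (fun y : ptopo => csum A y).
Proof.
rewrite /csum; elim: (index_enum I) => [|i r IH] y.
  by under eq_fun do rewrite big_nil; exact: cst_continuous.
under eq_fun do rewrite big_cons; case: (i \in A); last exact: IH.
exact: (@continuousD R R^o ptopo) (@proj_continuous _ _ i y) (IH y).
Qed.

Lemma closed_csum (A : {set I}) (P : set R) :
  closed P -> closed [set y : ptopo | P (csum A y)].
Proof. exact: (continuous_closedP _).1 (@csum_continuous A) P. Qed.

Lemma csum_comb (A : {set I}) (y1 y2 : pt) (l : R) :
  csum A (fun j => y1 j + l * (y2 j - y1 j)) = csum A y1 + l * (csum A y2 - csum A y1).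
Proof. by rewrite /csum big_split /= -mulr_sumr sumrB. Qed.

Definition slice (L : seq I) (x : pt) : set pt :=
  fun y => forall j, j \notin L -> y j = x j.

Lemma slice_closed L x : closed (slice L x : set ptopo).
Proof.
have -> : (slice L x : set ptopo) =
    \bigcap_(j in [set j | j \notin L]) ((fun y : ptopo => y j) @^-1` [set x j]).
  by apply/seteqP; split=> y /= yx j; [move=> jL|]; apply: yx.
apply: closed_bigI => j _.
apply: (continuous_closedP (fun y : ptopo => (y j : Rtopo))).1; last exact: closed_eq.
exact: (@proj_continuous _ (fun _ => Rtopo) j).
Qed.

Lemma slice_convex L x : convex_pts (slice L x).
Proof. by move=> y1 y2 l s1 s2 _ j jL; rewrite s1 // s2 // subrr mulr0 addr0. Qed.

Lemma proj_interval (F : set pt) (i : I) : convex_pts F -> compact (F : set ptopo) ->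
  F !=set0 -> exists lo hi, lo <= hi /\
    forall t, (exists2 y, F y & y i = t) <-> lo <= t <= hi.
Proof.
move=> cvxF cptF F0; have {}F0 : (F : set ptopo) !=set0 := F0.
have cont : {within (F : set ptopo), continuous (fun y : ptopo => y i)}.
  by apply: continuous_subspaceT => y; exact: proj_continuous.
have [yh /set_mem Fyh yh_max] := compact_EVT_max F0 cptF cont.
have [yl /set_mem Fyl yl_min] := compact_EVT_min F0 cptF cont.
exists (yl i), (yh i); split=> [|t]; first exact: yl_min (mem_set Fyh).
split=> [[y /mem_set Fy <-]|/andP [lt th]]; first by rewrite yl_min ?yh_max.
have [e|ne] := eqVneq (yh i) (yl i).
  by exists yl => //; apply: le_anti; rewrite lt -e th.
have d0 : 0 < yh i - yl i by rewrite subr_gt0 lt_neqAle eq_sym ne yl_min // mem_set.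
pose l := (t - yl i) / (yh i - yl i).
have l0 : 0 <= l by apply: divr_ge0; [rewrite subr_ge0|exact: ltW].
have l1 : l <= 1 by rewrite ler_pdivrMr // mul1r; lra.
exists (fun j => yl j + l * (yh j - yl j)); first by apply: cvxF => //; rewrite l0.
by rewrite /l divfK ?lt0r_neq0 //; lra.
Qed.

Lemma convex_compact_fibres (Q : set pt) :
  convex_pts Q -> compact (Q : set ptopo) -> interval_fibres Q.
Proof.
move=> cvxQ cptQ L x i iL.
pose F := Q `&` slice (i :: L) x.
have fibE t : fib Q L (upd x i t) <-> exists2 y, F y & y i = t.
  split=> [[y Qy yx]|[y [Qy yx] <-]].
    exists y; last by rewrite yx // /upd eqxx.
    split=> // j; rewrite inE negb_or => /andP [ji jL].
    by rewrite yx // /upd (negbTE ji).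
  exists y => // j jL; rewrite /upd; case: eqVneq => [->//|ji].
  by apply: yx; rewrite inE negb_or ji.
have [F0|Fempty] := pselect (F !=set0); last first.
  by left=> t /fibE [y Fy _]; apply: Fempty; exists y.
have cptF : compact (F : set ptopo) :=
  compact_closedI cptQ (slice_closed (L := i :: L) (x := x)).
have cvxF : convex_pts F by exact: convex_ptsI cvxQ (@slice_convex _ _).
have [lo [hi [lohi itv]]] := proj_interval i cvxF cptF F0.
by right; exists lo, hi; split=> // t; rewrite -itv; exact: fibE.
Qed.

End ConvexCompact.

(* Base polytopes of submodular functions: they are compact, convex and
   nonempty (greedy construction), so mu_P(A) is attained, which decides
   when P meets a slab  { a <= sum_A y, sum_I y = b }. *)
Section BasePolytope.
Local Open Scope classical_set_scope.
Variables (R : realType) (I : finType).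
Local Notation pt := (I -> R).
Local Notation full := [set: I]%SET.

Lemma base_polytope_closed (z : {set I} -> R) :
  closed (base_polytope z : set (ptopo R I)).
Proof.
have -> : (base_polytope z : set (ptopo R I)) =
    [set y | csum full y = z full] `&` \bigcap_(A in setT) [set y | csum A y <= z A].
  by apply/seteqP; split=> y /= [eqI leA]; split=> // A; [move=> _|]; apply: leA.
apply: closedI; first exact: closed_csum (closed_eq (y := _)).
by apply: closed_bigI => A _; exact: closed_csum (closed_le (y := _)).
Qed.

Lemma base_polytope_box (z : {set I} -> R) y i : base_polytope z y ->
  z full - \sum_(k in full | k != i) z [set k]%SET <= y i <= z [set i]%SET.
Proof.
move=> [eqI leA].
have up k : y k <= z [set k]%SET by have := leA [set k]%SET; rewrite big_set1.
have := eqI; rewrite (bigD1 i) ?inE //= => eqI'.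
have : \sum_(k in full | k != i) y k <= \sum_(k in full | k != i) z [set k]%SET.
  by apply: ler_sum => k _; exact: up.
by rewrite up andbT; lra.
Qed.

Lemma base_polytope_compact (z : {set I} -> R) :
  compact (base_polytope z : set (ptopo R I)).
Proof.
pose box i := `[z full - \sum_(k in full | k != i) z [set k]%SET, z [set i]%SET].
have := compact_closedI (@tychonoff I (fun _ => Rtopo R) box (fun i => @segment_compact R _ _))
  (@base_polytope_closed z).
by rewrite setIidr // => y /base_polytope_box box_y i; rewrite /box /= in_itv /= box_y.
Qed.

Lemma base_polytope_convex (z : {set I} -> R) : convex_pts (base_polytope z).
Proof.
move=> y1 y2 l [eq1 le1] [eq2 le2] /andP [l0 l1].
have [c1 c2] : csum full y1 = z full /\ csum full y2 = z full by [].
split=> [|A]; first by rewrite -[LHS]/(csum _ _) csum_comb c1 c2 subrr mulr0 addr0.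
by rewrite -[leLHS]/(csum _ _) csum_comb; have := le1 A; have := le2 A; rewrite /csum; nra.
Qed.

Lemma greedy_point (z : {set I} -> R) : z finset.set0 = 0 -> submodular z ->
  forall S : {set I}, exists y : pt,
    csum S y = z S /\ forall A, csum (A :&: S) y <= z (A :&: S).
Proof.
move=> z0 subm S; have [n] := ubnP #|S|; elim: n => // n IH in S *; rewrite ltnS => cardS.
have [->|[j jS]] := set_0Vmem S.
  by exists (fun _ => 0); split=> [|A]; rewrite /csum ?finset.setI0 big_set0 z0.
set S' := S :\ j.
have [|y [tight feas]] := IH S'; first by move: cardS; rewrite (cardsD1 j S) jS.
pose y' k := if k == j then z S - z S' else y k.
have y'E (B : {set I}) : j \notin B -> csum B y' = csum B y.
  by move=> jB; apply: eq_bigr => k kB; rewrite /y'; case: eqVneq kB jB => // -> ->.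
have jS' : j \notin S' by rewrite !inE eqxx.
exists y'; split=> [|A].
  by rewrite /csum (big_setD1 j jS) /= {1}/y' eqxx -/(csum S' y') y'E // tight subrK.
have jAS' : j \notin A :&: S' by rewrite inE (negbTE jS') andbF.
have [jA|jA] := boolP (j \in A); last first.
  have -> : A :&: S = A :&: S'.
    by apply/setP => k; rewrite !inE; case: eqVneq => [->|]; rewrite ?(negbTE jA).
  by rewrite y'E //; exact: feas.
have jAS : j \in A :&: S by rewrite inE jA jS.
have AS'E : (A :&: S) :\ j = A :&: S'.
  by apply/setP => k; rewrite !inE andbCA.
have SE : (A :&: S) :|: S' = S.
  apply/setP => k; rewrite !inE; case: eqVneq => [->|_]; first by rewrite jA jS.
  by case: (k \in S); rewrite ?andbT ?andbF ?orbT.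
have S'E : (A :&: S) :&: S' = A :&: S'.
  by apply/setP => k; rewrite !inE; case: (k == j); case: (k \in S); rewrite ?andbT ?andbF.
have := subm (A :&: S) S'; rewrite SE S'E.
rewrite /csum (big_setD1 j jAS) /= {1}/y' eqxx AS'E -/(csum (A :&: S') y') y'E //.
by have := feas A; lra.
Qed.

Lemma base_polytope_nonempty (z : {set I} -> R) : z finset.set0 = 0 -> submodular z ->
  exists y : pt, base_polytope z y.
Proof.
move=> z0 subm; have [y [tight feas]] := greedy_point z0 subm full.
by exists y; split=> // A; have := feas A; rewrite finset.setIT.
Qed.

Definition slab (A : {set I}) (a b : R) : set pt :=
  fun y => a <= csum A y /\ csum full y = b.

Lemma slab_closed A a b : closed (slab A a b : set (ptopo R I)).
Proof.
have -> : (slab A a b : set (ptopo R I)) =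
    [set y | a <= csum A y] `&` [set y | csum full y = b] by [].
by apply: closedI; [exact: closed_csum (closed_ge (y := a))|
                    exact: closed_csum (closed_eq (y := b))].
Qed.

Lemma slab_convex A a b : convex_pts (slab A a b).
Proof.
move=> y1 y2 l [a1 b1] [a2 b2] /andP [l0 l1].
by rewrite /slab !csum_comb b1 b2 subrr mulr0 addr0; split=> //; nra.
Qed.

Lemma mu_attained (P : set pt) (A : {set I}) : is_GP P ->
  exists2 y, P y & mu P A = csum A y /\ forall y', P y' -> csum A y' <= csum A y.
Proof.
move=> [z [z0 [subm ->]]]; have [y0 Py0] := base_polytope_nonempty z0 subm.
have P0 : (base_polytope z : set (ptopo R I)) !=set0 by exists y0.
have cont : {within (base_polytope z : set (ptopo R I)), continuous (csum A)}.
  by apply: continuous_subspaceT; exact: csum_continuous.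
have [y /set_mem Py ymax] := compact_EVT_max P0 (@base_polytope_compact z) cont.
have ub y' : base_polytope z y' -> csum A y' <= csum A y by move=> /mem_set; exact: ymax.
exists y => //; split=> //; apply: le_anti; apply/andP; split.
  by apply: ge_sup; [exists (csum A y0), y0|move=> _ [y' Py' ->]; exact: ub].
apply: sup_upper_bound; last by exists y.
by split; [exists (csum A y0), y0|exists (csum A y) => _ [y' Py' ->]; exact: ub].
Qed.

Lemma slab_meets_iff (P : set pt) A a b : is_GP P ->
  (exists y, P y /\ slab A a b y) <-> (a <= mu P A /\ b = mu P full).
Proof.
move=> gp; have [yA PyA [muA maxA]] := mu_attained A gp.
have [yI PyI [muI _]] := mu_attained full gp.
have total y : P y -> csum full y = mu P full.
  case: gp => z [_ [_ eP]] Py; rewrite muI; move: Py PyI; rewrite eP => -[Ey _] [EyI _].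
  by rewrite /csum Ey EyI.
split=> [[y [Py [ay <-]]]|[am ->]]; first by rewrite total // muA (le_trans ay (maxA _ Py)).
by exists yA; split=> //; split; [rewrite -muA|exact: total].
Qed.

End BasePolytope.

Section TutteValuation.
Local Open Scope classical_set_scope.
Variables (R : realType) (I : finType).
Local Notation pt := (I -> R).
Local Notation full := [set: I]%SET.

Definition chi (g : pt -> R) : R := chiL (enum I) g (fun _ => 0).

Lemma chi_comb (J : eqType) (r : seq J) (c : J -> R) (Q : J -> set pt) :
  (forall k, k \in r -> convex_pts (Q k) /\ compact (Q k : set (ptopo R I))) ->
  chi (fun y => \sum_(k <- r) c k * iv (Q k y)) =
  \sum_(k <- r) c k * iv (exists y, Q k y).
Proof.
move=> cc; rewrite /chi chiL_comb ?enum_uniq // => [|k kr]; last first.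
  by have [cvx cpt] := cc k kr; exact: convex_compact_fibres.
apply: eq_bigr => k _; congr (_ * _); apply: iv_iff.
by split=> [[y Qy _]|[y Qy]]; [exists y|exists y => // j; rewrite mem_enum].
Qed.

Definition comb (s : seq (R * set pt)) : pt -> R :=
  fun x => \sum_(cP <- s) cP.1 * indic cP.2 x.

Definition coef (g : pt -> R) (A : {set I}) (ab : R * R) : R :=
  chi (fun y => g y * iv (slab A ab.1 ab.2 y))
  - rlim (fun s => chi (fun y => g y * iv (slab A s ab.2 y))) ab.1.

Definition hatT (g : pt -> R) : Ralg R :=
  \sum_(A : {set I}) fsum (fun ab : R * R =>
      coef g A ab *: mon #|A| #|~: A| ab.1 (ab.2 - ab.1)).

Lemma chi_comb_slab (r : seq (R * set pt)) A a b : (forall k, k \in r -> is_GP k.2) ->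
  chi (fun y => comb r y * iv (slab A a b y)) =
  \sum_(k <- r) k.1 * iv (a <= mu k.2 A /\ b = mu k.2 full).
Proof.
move=> gp.
rewrite (@eq_fun _ _ _ (fun y => \sum_(k <- r) k.1 * iv (k.2 y /\ slab A a b y)));
  last by move=> y; rewrite /comb mulr_suml; apply: eq_bigr => k _; rewrite ivM mulrA.
rewrite chi_comb => [|k kr].
  apply: eq_big_seq => k kr; congr (_ * _).
  by apply: iv_iff; exact: slab_meets_iff (gp k kr).
have [z [_ [_ ->]]] := gp k kr.
split; first exact: (convex_ptsI (@base_polytope_convex R I z) (@slab_convex R I A a b)).
exact: compact_closedI (@base_polytope_compact R I z) (@slab_closed R I A a b).
Qed.

Lemma coef_comb (r : seq (R * set pt)) A ab : (forall k, k \in r -> is_GP k.2) ->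
  coef (comb r) A ab = \sum_(k <- r) k.1 * iv (ab = (mu k.2 A, mu k.2 full)).
Proof.
case: ab => a b gp; rewrite /coef chi_comb_slab //=.
rewrite (@rlimE _ _ _ (\sum_(k <- r) k.1 * (iv (a < mu k.2 A) * iv (b = mu k.2 full)))).
  rewrite -sumrB; apply: eq_bigr => k _; rewrite ivM -mulrBr -mulrBl halfline_jump -ivM.
  by congr (_ * _); apply: iv_iff; split=> [[-> ->]|[-> ->]].
apply: filterS (near_sum (r := r) _) => [s <-|k _]; first by rewrite chi_comb_slab.
by apply: filterS (halfline_near (mu k.2 A) a) => s near_s /=; rewrite ivM near_s.
Qed.

Lemma fsum_coef (r : seq (R * set pt)) A : (forall k, k \in r -> is_GP k.2) ->
  fsum (fun ab : R * R => coef (comb r) A ab *: mon #|A| #|~: A| ab.1 (ab.2 - ab.1)) =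
  \sum_(k <- r) k.1 *: mon #|A| #|~: A| (mu k.2 A) (mu k.2 full - mu k.2 A).
Proof.
move=> gp; rewrite (@eq_fun _ _ _ (fun ab : R * R => \sum_(k <- r)
    (k.1 * iv (ab = (mu k.2 A, mu k.2 full))) *: mon #|A| #|~: A| ab.1 (ab.2 - ab.1)));
  last by move=> ab; rewrite coef_comb // scaler_suml.
have off_p (k : R * set pt) (ab : R * R) : ab != (mu k.2 A, mu k.2 full) ->
    (k.1 * iv (ab = (mu k.2 A, mu k.2 full))) *: mon #|A| #|~: A| ab.1 (ab.2 - ab.1) = 0.
  by move=> /eqP ne; rewrite ivF // mulr0 scale0r.
rewrite fsum_sum => [|k _]; last first.
  by exists [:: (mu k.2 A, mu k.2 full)] => ab; rewrite mem_seq1; exact: off_p.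
by apply: eq_bigr => k _; rewrite (fsum_point (off_p k)) (ivT erefl) mulr1.
Qed.

Lemma hatT_comb (r : seq (R * set pt)) : (forall k, k \in r -> is_GP k.2) ->
  hatT (comb r) = \sum_(k <- r) k.1 *: tutte k.2.
Proof.
move=> gp; rewrite /hatT (eq_bigr _ (fun A _ => fsum_coef A gp)) exchange_big.
by apply: eq_bigr => k _; rewrite /tutte scaler_sumr.
Qed.

Lemma hatT_add (s1 s2 : seq (R * set pt)) :
  (forall k, k \in s1 -> is_GP k.2) -> (forall k, k \in s2 -> is_GP k.2) ->
  hatT (fun x => comb s1 x + comb s2 x) = hatT (comb s1) + hatT (comb s2).
Proof.
move=> gp1 gp2; have -> : (fun x => comb s1 x + comb s2 x) = comb (s1 ++ s2).
  by apply: funext => x; rewrite /comb big_cat.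
rewrite !hatT_comb ?big_cat // => k; rewrite mem_cat => /orP [/gp1|/gp2] //.
Qed.

Lemma hatT_scale (c : R) (s : seq (R * set pt)) : (forall k, k \in s -> is_GP k.2) ->
  hatT (fun x => c * comb s x) = c *: hatT (comb s).
Proof.
move=> gp; have -> : (fun x => c * comb s x) = comb [seq (c * k.1, k.2) | k <- s].
  by apply: funext => x; rewrite /comb big_map mulr_sumr; apply: eq_bigr => k _; rewrite mulrA.
rewrite (hatT_comb gp) hatT_comb => [|_ /mapP [k ks ->]]; last exact: gp k ks.
by rewrite big_map scaler_sumr; apply: eq_bigr => k _; rewrite scalerA.
Qed.

Lemma hatT_indic (P : set pt) : is_GP P -> tutte P = hatT (indic P).
Proof.
move=> gp; have -> : indic P = comb [:: (1, P)].
  by apply: funext => x; rewrite /comb big_seq1 mul1r.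
by rewrite hatT_comb ?big_seq1 ?scale1r // => k; rewrite mem_seq1 => /eqP ->.
Qed.

End TutteValuation.

Theorem theorem6p4 (R : realType) (I : finType) :
  strong_valuation (@tutte R I).
Proof.
exists (@hatT R I); split; [|split].
- by move=> _ _ [s1 [gp1 ->]] [s2 [gp2 ->]]; exact: hatT_add.
- by move=> c _ [s [gp ->]]; exact: hatT_scale.
- exact: hatT_indic.
Qed.
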